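(* Let $D\ge 2$, let $W_1,\dots,W_D$ be mutually independent discrete random variables with finite entropy, and let $S$ be a discrete random variable (jointly distributed with $W_1,\dots,W_D$) with $H(S)<\infty$. Then $$\sum_{\substack{d_1,d_2\in[1:D]\\ d_1\neq d_2}} I\big(W_{d_1},W_{d_2};S\big)\ \le\ (2D-1)\,H(S),$$ where the sum runs over ordered pairs $(d_1,d_2)$.
   Context: $I(\cdot;\cdot)$ denotes mutual information and $H(\cdot)$ Shannon entropy; $[1:D]=\{1,\dots,D\}$. *)

From Stdlib Require Import Reals Lra Lia Classical ClassicalEpsilon.
Open Scope R_scope.

(* Discrete probability space: sample space nat with a pmf p.
   (The joint law of countably many discrete random variables is a
   distribution on a countable set, so this loses no generality.) *)
Definition is_pmf (p : nat -> R) : Prop :=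
  (forall w, 0 <= p w) /\ infinite_sum p 1.

(* Value of a convergent series (0 if it does not converge). *)
Definition sum_of (f : nat -> R) : R :=
  match excluded_middle_informative (exists l, infinite_sum f l) with
  | left H => proj1_sig (constructive_indefinite_description _ H)
  | right _ => 0
  end.

Definition Pr (p : nat -> R) (E : nat -> Prop) : R :=
  sum_of (fun w => if excluded_middle_informative (E w) then p w else 0).

(* Summand of the Shannon entropy H(X) = E[- ln P(X = X)] = sum_w p(w) (- ln p_X(X w)). *)
Definition ent_term {A : Type} (p : nat -> R) (X : nat -> A) (w : nat) : R :=
  p w * - ln (Pr p (fun w' => X w' = X w)).

Definition finite_entropy {A : Type} (p : nat -> R) (X : nat -> A) : Prop :=
  exists l, infinite_sum (ent_term p X) l.

Definition Ent {A : Type} (p : nat -> R) (X : nat -> A) : R :=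
  sum_of (ent_term p X).

(* Mutual information I(X;Y) = H(X) + H(Y) - H(X,Y) (all finite where used). *)
Definition MI {A B : Type} (p : nat -> R) (X : nat -> A) (Y : nat -> B) : R :=
  Ent p X + Ent p Y - Ent p (fun w => (X w, Y w)).

(* rsum n f = f 1 + ... + f n *)
Fixpoint rsum (n : nat) (f : nat -> R) : R :=
  match n with O => 0 | S m => rsum m f + f n end.
Fixpoint rprod (n : nat) (f : nat -> R) : R :=
  match n with O => 1 | S m => rprod m f * f n end.

Definition mutually_independent (p : nat -> R) (D : nat) (W : nat -> nat -> nat) : Prop :=
  forall x : nat -> nat,
    Pr p (fun w => forall d, (1 <= d <= D)%nat -> W d w = x d)
    = rprod D (fun d => Pr p (fun w => W d w = x d)).

(* Let H(P) be the entropy of the subvector W_P and H_S(P) that of (W_P, S).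
   Both are submodular set functions (Shannon's inequality
   H(X,Y,Z) + H(Z) <= H(X,Z) + H(Y,Z), obtained for countably-valued variables from
   ln t <= t - 1), with H <= H_S <= H + H(S), H({}) = 0 and, by independence,
   H([1:D]) = sum_d H({d}).  The chain rule splits
   I(W_a,W_b;S) = I(W_a;S) + I(W_b;S|W_a).  Over the ordered pairs the first terms
   add up to (D-1) sum_a I(W_a;S) <= (D-1) H(S), because independence gives
   sum_a I(W_a;S) <= I(W_[1:D];S) <= H(S).  For fixed a, subadditivity of H and a
   telescoping chain for H_S give sum_{b<>a} I(W_b;S|W_a) <= H(S), contributing D H(S). *)

From Stdlib Require Import Reals Lra Lia ClassicalEpsilon
  FunctionalExtensionality PropExtensionality List.
Open Scope R_scope.

Lemma sum_of_eq f l : infinite_sum f l -> sum_of f = l.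
Proof.
  intros H. unfold sum_of. destruct excluded_middle_informative as [Hex|Hno].
  - destruct (constructive_indefinite_description _ Hex) as [l' Hl']; simpl.
    exact (uniqueness_sum _ _ _ Hl' H).
  - exfalso; apply Hno; exists l; exact H.
Qed.

Lemma infinite_sum_ext f g l : (forall k, f k = g k) -> infinite_sum f l -> infinite_sum g l.
Proof. intros H. replace g with f; [auto|]. apply functional_extensionality; auto. Qed.

Lemma infinite_sum_plus f g l1 l2 :
  infinite_sum f l1 -> infinite_sum g l2 -> infinite_sum (fun k => f k + g k) (l1 + l2).
Proof.
  intros H1 H2 e He. destruct (CV_plus _ _ _ _ H1 H2 e He) as [N HN].
  exists N; intros n Hn. rewrite sum_plus. apply HN; auto.
Qed.

Lemma infinite_sum_zero : infinite_sum (fun _ => 0) 0.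
Proof.
  intros e He. exists 0%nat. intros n _. rewrite sum_cte. unfold Rdist.
  rewrite Rmult_0_l, Rminus_diag, Rabs_R0. exact He.
Qed.

Lemma infinite_sum_rsum n (g : nat -> nat -> R) l :
  (forall d, (1 <= d <= n)%nat -> infinite_sum (g d) (l d)) ->
  infinite_sum (fun k => rsum n (fun d => g d k)) (rsum n l).
Proof.
  induction n as [|n IH]; simpl; intros H.
  - exact infinite_sum_zero.
  - apply infinite_sum_plus; [apply IH; intros; apply H|apply H]; lia.
Qed.

Lemma Un_cv_const c : Un_cv (fun _ => c) c.
Proof. intros e He; exists 0%nat; intros; unfold Rdist; rewrite Rminus_diag, Rabs_R0; exact He. Qed.

Lemma infinite_sum_le f g l1 l2 :
  (forall k, f k <= g k) -> infinite_sum f l1 -> infinite_sum g l2 -> l1 <= l2.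
Proof.
  intros H H1 H2. eapply Rle_cv_lim; [intros n; apply sum_growing, H | exact H1 | exact H2].
Qed.

Lemma infinite_sum_ge0 f l : (forall k, 0 <= f k) -> infinite_sum f l -> 0 <= l.
Proof. intros H. apply (infinite_sum_le (fun _ => 0)); [exact H | exact infinite_sum_zero]. Qed.

Lemma infinite_sum_of_partial_le f M :
  (forall k, 0 <= f k) -> (forall N, sum_f_R0 f N <= M) -> exists l, infinite_sum f l.
Proof.
  intros H0 HM. destruct (growing_cv (fun N => sum_f_R0 f N)) as [l Hl].
  - intros n; simpl. specialize (H0 (S n)); lra.
  - exists M. intros x [N ->]. apply HM.
  - exists l; exact Hl.
Qed.

Lemma infinite_sum_of_le f g l :
  (forall k, 0 <= f k <= g k) -> infinite_sum g l -> exists l', infinite_sum f l'.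
Proof.
  intros H Hg. destruct (Rseries_CV_comp f g H (exist _ l Hg)) as [l' Hl'].
  exists l'; exact Hl'.
Qed.

Lemma ln_le_sub1 x : 0 < x -> ln x <= x - 1.
Proof. intros Hx. generalize (exp_ineq1_le (ln x)). rewrite exp_ln by exact Hx. lra. Qed.

(* Also true for [x <= 0], where [ln] takes the junk value 0. *)
Lemma ln_nonpos x : x <= 1 -> ln x <= 0.
Proof.
  intros Hx. destruct (Rlt_dec 0 x) as [Hpos|Hnpos].
  - rewrite <- ln_1. destruct (Req_dec x 1) as [->|Hne]; [lra|].
    left; apply ln_increasing; lra.
  - unfold ln. destruct (Rlt_dec 0 x); [contradiction | lra].
Qed.

Lemma ln_le_mono x y : 0 < x -> x <= y -> ln x <= ln y.
Proof. intros Hx [Hxy| <-]; [left; apply ln_increasing | right]; auto. Qed.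

Definition lsum (f : nat -> R) (L : list nat) : R := fold_right (fun w acc => f w + acc) 0 L.

Lemma lsum_app f L1 L2 : lsum f (L1 ++ L2) = lsum f L1 + lsum f L2.
Proof. induction L1 as [|w L1 IH]; simpl; [|rewrite IH]; lra. Qed.

Lemma lsum_seq f N : lsum f (seq 0 (S N)) = sum_f_R0 f N.
Proof. induction N as [|N IH]; [simpl; lra|]. rewrite seq_S, lsum_app, IH; simpl; lra. Qed.

Lemma lsum_ext_in f g L : (forall w, In w L -> f w = g w) -> lsum f L = lsum g L.
Proof. induction L as [|w L IH]; simpl; intros H; [|rewrite H, IH]; auto. Qed.

Lemma lsum_ge0 f L : (forall w, In w L -> 0 <= f w) -> 0 <= lsum f L.
Proof.
  induction L as [|w L IH]; simpl; intros H; [lra|].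
  assert (0 <= f w) by auto. assert (0 <= lsum f L) by auto. lra.
Qed.

Lemma lsum_scal c f L : lsum (fun w => c * f w) L = c * lsum f L.
Proof. induction L as [|w L IH]; simpl; [|rewrite IH]; ring. Qed.

Lemma lsum_filter_split f a L :
  lsum f L = lsum f (filter a L) + lsum f (filter (fun x => negb (a x)) L).
Proof. induction L as [|w L IH]; simpl; [lra|]. destruct (a w); simpl; rewrite IH; lra. Qed.

Lemma filter_filter_sub (a b : nat -> bool) L :
  (forall x, a x = true -> b x = true) -> filter a (filter b L) = filter a L.
Proof.
  intros H; induction L as [|w L IH]; simpl; auto.
  destruct (b w) eqn:Hb; simpl; rewrite ?IH; auto.
  destruct (a w) eqn:Ha; auto. rewrite H in Hb; auto; discriminate.
Qed.

Lemma NoDup_map_filter {T} (K : nat -> T) a L : NoDup (map K L) -> NoDup (map K (filter a L)).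
Proof.
  induction L as [|w L IH]; simpl; auto. intros H; inversion H as [|? ? Hw HL]; subst.
  destruct (a w); simpl; auto. constructor; auto.
  intros Hin. apply in_map_iff in Hin as [x [Hx Hx']]. apply filter_In in Hx' as [Hx' _].
  apply Hw. rewrite <- Hx. apply in_map; auto.
Qed.

Lemma NoDup_map_coarser {T U} (f : nat -> T) (g : nat -> U) L :
  NoDup (map f L) -> (forall x y, In x L -> In y L -> g x = g y -> f x = f y) ->
  NoDup (map g L).
Proof.
  induction L as [|w L IH]; simpl; intros H Hfg; constructor; inversion H; subst.
  - intros Hin. apply in_map_iff in Hin as [x [Hx Hx']].
    match goal with Hf : ~ In (f w) _ |- _ => apply Hf end.
    rewrite <- (Hfg x w); auto. apply in_map; auto.
  - apply IH; auto.
Qed.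

Definition same_class {A : Type} (K : nat -> A) (w0 w : nat) : bool :=
  if excluded_middle_informative (K w = K w0) then true else false.

Lemma same_class_true {A} (K : nat -> A) w0 w : same_class K w0 w = true <-> K w = K w0.
Proof. unfold same_class; destruct excluded_middle_informative; split; auto; discriminate. Qed.

Lemma lsum_le_by_classes {A : Type} (K : nat -> A) (f c : nat -> R) (L : list nat) (M : R) :
  (forall w0, In w0 L -> lsum f (filter (same_class K w0) L) <= c w0) ->
  (forall R, incl R L -> NoDup (map K R) -> lsum c R <= M) ->
  lsum f L <= M.
Proof.
  remember (length L) as n eqn:Hn. revert L M Hn.
  induction n as [n IH] using (well_founded_induction Wf_nat.lt_wf).
  intros L M Hn Hclass Hrep. destruct L as [|w0 L0].
  - apply (Hrep nil); [intros x Hx; inversion Hx | constructor].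
  - set (L := w0 :: L0) in *.
    set (L' := filter (fun x => negb (same_class K w0 x)) L).
    assert (HL' : forall x, In x L' <-> In x L /\ K x <> K w0).
    { intros x. unfold L'. rewrite filter_In, <- same_class_true.
      destruct (same_class K w0 x); simpl; intuition discriminate. }
    assert (Hlen : (length L' < n)%nat).
    { subst n. unfold L', L; simpl.
      replace (same_class K w0 w0) with true by (symmetry; apply same_class_true; auto).
      simpl. apply Nat.lt_succ_r, filter_length_le. }
    assert (Hrest : lsum f L' <= M - c w0).
    { apply (IH (length L') Hlen L' _ eq_refl).
      - intros w1 Hw1. apply HL' in Hw1 as [Hw1 Hk]. unfold L'.
        rewrite filter_filter_sub; [apply Hclass; auto|].
        intros x Hx. apply same_class_true in Hx. apply Bool.negb_true_iff.
        destruct (same_class K w0 x) eqn:E; auto. apply same_class_true in E. congruence.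
      - intros R HR HN. assert (H := Hrep (w0 :: R)). simpl in H.
        enough (c w0 + lsum c R <= M) by lra. apply H.
        + intros x [<-|Hx]; [left; reflexivity|]. apply HL', HR, Hx.
        + constructor; auto. intros Hin. apply in_map_iff in Hin as [x [Hx Hx']].
          apply HR, HL' in Hx' as [_ Hne]. congruence. }
    rewrite (lsum_filter_split f (same_class K w0) L).
    assert (Hc := Hclass w0 (or_introl eq_refl)). fold L'. lra.
Qed.

Definition pmf_on (p : nat -> R) (E : nat -> Prop) (w : nat) : R :=
  if excluded_middle_informative (E w) then p w else 0.

Section Probability.
Variable p : nat -> R.
Hypothesis hp : is_pmf p.

Lemma pmf_ge0 w : 0 <= p w.
Proof. apply hp. Qed.

Lemma pmf_on_bounds E w : 0 <= pmf_on p E w <= p w.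
Proof. unfold pmf_on. destruct excluded_middle_informative; generalize (pmf_ge0 w); lra. Qed.

Lemma Pr_sum E : infinite_sum (pmf_on p E) (Pr p E).
Proof.
  destruct (infinite_sum_of_le (pmf_on p E) p 1) as [l Hl].
  - apply pmf_on_bounds.
  - apply hp.
  - unfold Pr; fold (pmf_on p E). rewrite (sum_of_eq _ _ Hl). exact Hl.
Qed.

Lemma Pr_ge0 E : 0 <= Pr p E.
Proof. apply (infinite_sum_ge0 (pmf_on p E)); [apply pmf_on_bounds | apply Pr_sum]. Qed.

Lemma Pr_le1 E : Pr p E <= 1.
Proof.
  apply (infinite_sum_le (pmf_on p E) p); [apply pmf_on_bounds | apply Pr_sum | apply hp].
Qed.

Lemma Pr_mono E F : (forall w, E w -> F w) -> Pr p E <= Pr p F.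
Proof.
  intros H. apply (infinite_sum_le (pmf_on p E) (pmf_on p F)); try apply Pr_sum.
  intros k. unfold pmf_on. generalize (pmf_ge0 k).
  repeat destruct excluded_middle_informative; try lra. exfalso; auto.
Qed.

Lemma Pr_ext E F : (forall w, E w <-> F w) -> Pr p E = Pr p F.
Proof.
  intros H. replace F with E; [reflexivity|].
  apply functional_extensionality; intros w. apply propositional_extensionality, H.
Qed.

Lemma Pr_True : Pr p (fun _ => True) = 1.
Proof.
  apply (uniqueness_sum (pmf_on p (fun _ => True))); [apply Pr_sum|].
  apply (infinite_sum_ext p); [|apply hp].
  intros k; unfold pmf_on; destruct excluded_middle_informative; tauto.
Qed.

Lemma Pr_split E G : Pr p E = Pr p (fun w => E w /\ G w) + Pr p (fun w => E w /\ ~ G w).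
Proof.
  apply (uniqueness_sum (pmf_on p E)); [apply Pr_sum|].
  eapply infinite_sum_ext; [|apply infinite_sum_plus; apply Pr_sum].
  intros k; unfold pmf_on. repeat destruct excluded_middle_informative; try lra; tauto.
Qed.

Lemma sum_pmf_on_singleton w n :
  (w <= n)%nat -> sum_f_R0 (pmf_on p (fun w' => w' = w)) n = p w.
Proof.
  induction n as [|n IH]; intros Hn; simpl.
  - assert (w = 0%nat) as -> by lia.
    unfold pmf_on; destruct excluded_middle_informative; tauto.
  - unfold pmf_on at 2. destruct excluded_middle_informative as [Heq|Hne]; [subst w|].
    + rewrite (sum_eq _ (fun _ => 0)), sum_cte; [lra|].
      intros i Hi; unfold pmf_on; destruct excluded_middle_informative; [lia|reflexivity].
    + rewrite IH; [lra|lia].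
Qed.

Lemma Pr_singleton w : Pr p (fun w' => w' = w) = p w.
Proof.
  apply (uniqueness_sum (pmf_on p (fun w' => w' = w))); [apply Pr_sum|].
  intros e He. exists w. intros n Hn. rewrite sum_pmf_on_singleton by exact Hn.
  unfold Rdist. rewrite Rminus_diag, Rabs_R0. exact He.
Qed.

Lemma pmf_le_Pr E w : E w -> p w <= Pr p E.
Proof. intros H. rewrite <- Pr_singleton. apply Pr_mono. intros w' ->; exact H. Qed.

Lemma lsum_Pr_distinct_le {A : Type} (K : nat -> A) (R : list nat) (F : nat -> Prop) :
  NoDup (map K R) -> lsum (fun w => Pr p (fun w' => F w' /\ K w' = K w)) R <= Pr p F.
Proof.
  revert F. induction R as [|w R IH]; intros F HN; simpl; [apply Pr_ge0|].
  inversion HN as [|? ? Hw HN']; subst.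
  rewrite (Pr_split F (fun w' => K w' = K w)).
  rewrite (lsum_ext_in _ (fun w0 => Pr p (fun w' => (F w' /\ K w' <> K w) /\ K w' = K w0))).
  - specialize (IH (fun w' => F w' /\ K w' <> K w) HN'). lra.
  - intros x Hx. apply Pr_ext. intros y. split; [|tauto].
    intros [HF Hy]. repeat split; auto. intros Hyw. apply Hw. rewrite <- Hyw, Hy. apply in_map, Hx.
Qed.

Lemma lsum_pmf_le_Pr (E : nat -> Prop) R :
  NoDup R -> (forall w, In w R -> E w) -> lsum p R <= Pr p E.
Proof.
  intros HN HE. eapply Rle_trans; [|apply (lsum_Pr_distinct_le (fun w => w) R E); rewrite map_id; exact HN].
  right. apply lsum_ext_in. intros w Hw. rewrite <- (Pr_singleton w) at 1. apply Pr_ext.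
  intros y; split; [intros ->; auto | tauto].
Qed.

Definition determines {A B : Type} (K1 : nat -> A) (K2 : nat -> B) : Prop :=
  forall w w', K1 w' = K1 w -> K2 w' = K2 w.

Definition same_partition {A B : Type} (K1 : nat -> A) (K2 : nat -> B) : Prop :=
  forall w w', K1 w' = K1 w <-> K2 w' = K2 w.

Lemma ent_term_ge0 {A} (K : nat -> A) w : 0 <= ent_term p K w.
Proof.
  unfold ent_term. apply Rmult_le_pos; [apply pmf_ge0|].
  generalize (ln_nonpos _ (Pr_le1 (fun w' => K w' = K w))). lra.
Qed.

Lemma Ent_sum {A} (K : nat -> A) : finite_entropy p K -> infinite_sum (ent_term p K) (Ent p K).
Proof. intros [l Hl]. unfold Ent. rewrite (sum_of_eq _ _ Hl). exact Hl. Qed.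

Lemma ent_term_same_partition {A B} (K1 : nat -> A) (K2 : nat -> B) :
  same_partition K1 K2 -> ent_term p K1 = ent_term p K2.
Proof.
  intros H. apply functional_extensionality. intros w. unfold ent_term.
  rewrite (Pr_ext _ (fun w' => K2 w' = K2 w)); [reflexivity | apply H].
Qed.

Lemma Ent_same_partition {A B} (K1 : nat -> A) (K2 : nat -> B) :
  same_partition K1 K2 -> Ent p K1 = Ent p K2.
Proof. intros H. unfold Ent. rewrite (ent_term_same_partition K1 K2 H). reflexivity. Qed.

Lemma finite_entropy_same_partition {A B} (K1 : nat -> A) (K2 : nat -> B) :
  same_partition K1 K2 -> finite_entropy p K1 -> finite_entropy p K2.
Proof. intros H. unfold finite_entropy. rewrite (ent_term_same_partition K1 K2 H). auto. Qed.

Lemma ent_term_le_of_determines {A B} (K1 : nat -> A) (K2 : nat -> B) :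
  determines K1 K2 -> forall w, ent_term p K2 w <= ent_term p K1 w.
Proof.
  intros H w. unfold ent_term. destruct (pmf_ge0 w) as [Hw|Hw]; [|rewrite <- Hw; lra].
  apply Rmult_le_compat_l; [lra|]. apply Ropp_le_contravar, ln_le_mono.
  - apply Rlt_le_trans with (p w); [exact Hw | apply pmf_le_Pr; reflexivity].
  - apply Pr_mono, H.
Qed.

Lemma Ent_le_of_determines {A B} (K1 : nat -> A) (K2 : nat -> B) :
  determines K1 K2 -> finite_entropy p K1 -> finite_entropy p K2 /\ Ent p K2 <= Ent p K1.
Proof.
  intros H [l Hl].
  assert (Hfin : finite_entropy p K2).
  { apply (infinite_sum_of_le _ (ent_term p K1) l); [|exact Hl].
    intros k; split; [apply ent_term_ge0 | apply ent_term_le_of_determines, H]. }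
  split; [exact Hfin|].
  apply (infinite_sum_le (ent_term p K2) (ent_term p K1)).
  - apply ent_term_le_of_determines, H.
  - apply Ent_sum, Hfin.
  - apply Ent_sum. exists l; exact Hl.
Qed.

Lemma ent_term_const {T} (t : T) : ent_term p (fun _ => t) = fun _ => 0.
Proof.
  apply functional_extensionality; intros w. unfold ent_term.
  rewrite (Pr_ext _ (fun _ => True)) by tauto. rewrite Pr_True, ln_1. ring.
Qed.

Lemma finite_entropy_const {T} (t : T) : finite_entropy p (fun _ => t).
Proof. exists 0. rewrite ent_term_const. exact infinite_sum_zero. Qed.

Lemma Ent_const {T} (t : T) : Ent p (fun _ => t) = 0.
Proof. unfold Ent. rewrite ent_term_const. apply sum_of_eq, infinite_sum_zero. Qed.

Section Submodularity.
Context {A B C : Type} (X : nat -> A) (Y : nat -> B) (Z : nat -> C).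

Let XYZ w := (X w, Y w, Z w).
Let XZ w := (X w, Z w).
Let YZ w := (Y w, Z w).
Let PXYZ w := Pr p (fun w' => XYZ w' = XYZ w).
Let PXZ w := Pr p (fun w' => XZ w' = XZ w).
Let PYZ w := Pr p (fun w' => YZ w' = YZ w).
Let PZ w := Pr p (fun w' => Z w' = Z w).

(* The law of (X, Y, Z) that makes X and Y conditionally independent given Z,
   evaluated at the values taken at [w]. *)
Let q w := PXZ w * PYZ w / PZ w.

Lemma lsum_PXZ_PYZ_le w0 F :
  NoDup (map XYZ F) -> (forall w, In w F -> Z w = Z w0) ->
  lsum (fun w => PXZ w * PYZ w) F <= PZ w0 * PZ w0.
Proof.
  intros HN HF. apply (lsum_le_by_classes X _ (fun w => PXZ w * PZ w0)).
  - intros w1 Hw1. set (G := filter (same_class X w1) F).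
    assert (HG : forall w, In w G -> In w F /\ X w = X w1).
    { intros w Hw. apply filter_In in Hw as [Hw Hx]. apply same_class_true in Hx. auto. }
    rewrite (lsum_ext_in _ (fun w => PXZ w1 * PYZ w)).
    2:{ intros w Hw. destruct (HG w Hw) as [HwF Hx]. unfold PXZ, XZ.
        rewrite Hx, (HF w HwF), (HF w1 Hw1). reflexivity. }
    rewrite lsum_scal. apply Rmult_le_compat_l; [apply Pr_ge0|].
    eapply Rle_trans; [|apply (lsum_Pr_distinct_le Y G (fun w' => Z w' = Z w0))].
    + right. apply lsum_ext_in. intros w Hw. unfold PYZ, YZ. apply Pr_ext. intros w'.
      rewrite pair_equal_spec, (HF w (proj1 (HG w Hw))). tauto.
    + apply (NoDup_map_coarser XYZ); [apply NoDup_map_filter, HN|].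
      intros x y Hx Hy Hxy. destruct (HG x Hx) as [HxF Hx1], (HG y Hy) as [HyF Hy1].
      unfold XYZ. rewrite Hxy, Hx1, Hy1, (HF x HxF), (HF y HyF). reflexivity.
  - intros R HR HNR. rewrite (lsum_ext_in _ (fun w => PZ w0 * PXZ w)) by (intros; ring).
    rewrite lsum_scal. apply Rmult_le_compat_l; [apply Pr_ge0|].
    eapply Rle_trans; [|apply (lsum_Pr_distinct_le X R (fun w' => Z w' = Z w0)), HNR].
    right. apply lsum_ext_in. intros w Hw. unfold PXZ, XZ. apply Pr_ext. intros w'.
    rewrite pair_equal_spec, (HF w (HR w Hw)). tauto.
Qed.

Lemma lsum_q_le1 R : NoDup (map XYZ R) -> lsum q R <= 1.
Proof.
  intros HN. apply (lsum_le_by_classes Z q PZ).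
  - intros w0 Hw0. set (F := filter (same_class Z w0) R).
    assert (HF : forall w, In w F -> Z w = Z w0).
    { intros w Hw. apply filter_In in Hw as [_ Hz]. apply same_class_true, Hz. }
    rewrite (lsum_ext_in _ (fun w => / PZ w0 * (PXZ w * PYZ w))).
    2:{ intros w Hw. unfold q, PZ. rewrite (HF w Hw). unfold Rdiv. ring. }
    rewrite lsum_scal.
    assert (Hm := lsum_PXZ_PYZ_le w0 F (NoDup_map_filter _ _ _ HN) HF).
    destruct (Pr_ge0 (fun w' => Z w' = Z w0)) as [Hz|Hz]; fold (PZ w0) in Hz.
    + apply (Rmult_le_reg_l (PZ w0)); [exact Hz|].
      rewrite <- Rmult_assoc, Rinv_r by lra. lra.
    + rewrite <- Hz, Rinv_0. lra.
  - intros R1 _ HN1. rewrite <- Pr_True.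
    eapply Rle_trans; [|apply (lsum_Pr_distinct_le Z R1 (fun _ => True)), HN1].
    right. apply lsum_ext_in. intros w _. apply Pr_ext. tauto.
Qed.

Let ratio w := p w * (q w / PXYZ w).

Lemma partial_sum_ratio_le1 N : sum_f_R0 ratio N <= 1.
Proof.
  rewrite <- lsum_seq. apply (lsum_le_by_classes XYZ ratio q).
  - intros w0 _. set (F := filter _ _).
    rewrite (lsum_ext_in _ (fun w => q w0 / PXYZ w0 * p w)).
    2:{ intros w Hw. apply filter_In in Hw as [_ Hw]. apply same_class_true in Hw.
        unfold XYZ in Hw. apply pair_equal_spec in Hw as [Hxy Hz].
        apply pair_equal_spec in Hxy as [Hx Hy].
        unfold ratio, q, PXYZ, PXZ, PYZ, PZ, XYZ, XZ, YZ. rewrite Hx, Hy, Hz. ring. }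
    rewrite lsum_scal.
    assert (Hq : 0 <= q w0).
    { unfold q, Rdiv. apply Rmult_le_pos; [apply Rmult_le_pos; apply Pr_ge0|].
      destruct (Pr_ge0 (fun w' => Z w' = Z w0)) as [Hz|Hz]; fold (PZ w0) in Hz.
      - left; apply Rinv_0_lt_compat, Hz.
      - rewrite <- Hz, Rinv_0; lra. }
    assert (HpF : lsum p F <= PXYZ w0).
    { apply lsum_pmf_le_Pr; [apply NoDup_filter, seq_NoDup|].
      intros w Hw. apply filter_In in Hw as [_ Hw]. apply same_class_true, Hw. }
    assert (HF0 : 0 <= lsum p F) by (apply lsum_ge0; intros; apply pmf_ge0).
    destruct (Pr_ge0 (fun w' => XYZ w' = XYZ w0)) as [Ha|Ha]; fold (PXYZ w0) in Ha.
    + unfold Rdiv. rewrite Rmult_assoc. rewrite <- (Rmult_1_r (q w0)) at 2.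
      apply Rmult_le_compat_l; [exact Hq|].
      apply (Rmult_le_reg_l (PXYZ w0)); [exact Ha|].
      rewrite <- Rmult_assoc, Rinv_r by lra. lra.
    + rewrite <- Ha. unfold Rdiv. rewrite Rinv_0. lra.
  - intros R _ HN. apply lsum_q_le1, HN.
Qed.

(* Gibbs' inequality [ln t <= t - 1] at [t = PXZ PYZ / (PZ PXYZ)]. *)
Lemma ent_term_submodular w :
  ent_term p XYZ w + ent_term p Z w <= ent_term p XZ w + ent_term p YZ w + ratio w - p w.
Proof.
  unfold ent_term, ratio, q. fold (PXYZ w) (PXZ w) (PYZ w) (PZ w).
  destruct (pmf_ge0 w) as [Hw|Hw]; [|rewrite <- Hw; lra].
  assert (Ha : p w <= PXYZ w) by (apply pmf_le_Pr; reflexivity).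
  assert (Hb : p w <= PXZ w) by (apply pmf_le_Pr; reflexivity).
  assert (Hc : p w <= PYZ w) by (apply pmf_le_Pr; reflexivity).
  assert (Hd : p w <= PZ w) by (apply pmf_le_Pr; reflexivity).
  set (a := PXYZ w) in *. set (b := PXZ w) in *. set (c := PYZ w) in *. set (d := PZ w) in *.
  assert (Hln : ln b + ln c - ln d - ln a <= b * c / d / a - 1).
  { replace (ln b + ln c - ln d - ln a) with (ln (b * c / d / a)).
    - apply ln_le_sub1. unfold Rdiv.
      repeat apply Rmult_lt_0_compat; try apply Rinv_0_lt_compat; lra.
    - unfold Rdiv. rewrite !ln_mult, !ln_Rinv; try lra;
        repeat apply Rmult_lt_0_compat; try apply Rinv_0_lt_compat; lra. }
  apply (Rmult_le_compat_l (p w)) in Hln; [|lra].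
  unfold Rdiv in *. nra.
Qed.

Lemma Ent_submodular :
  finite_entropy p (fun w => (X w, Z w)) -> finite_entropy p (fun w => (Y w, Z w)) ->
  finite_entropy p (fun w => (X w, Y w, Z w)) /\
  Ent p (fun w => (X w, Y w, Z w)) + Ent p Z
  <= Ent p (fun w => (X w, Z w)) + Ent p (fun w => (Y w, Z w)).
Proof.
  fold XYZ XZ YZ. intros HXZ HYZ.
  assert (HZ : finite_entropy p Z).
  { apply (Ent_le_of_determines XZ Z); [|exact HXZ].
    intros w w' Heq. apply pair_equal_spec in Heq; tauto. }
  assert (Hpartial : forall N, sum_f_R0 (ent_term p XYZ) N + sum_f_R0 (ent_term p Z) N
                               <= Ent p XZ + Ent p YZ + 1 - sum_f_R0 p N).
  { intros N. rewrite <- sum_plus.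
    eapply Rle_trans; [apply sum_growing; intros k; apply ent_term_submodular|].
    rewrite !minus_sum, !sum_plus.
    assert (H1 := sum_incr _ N _ (Ent_sum _ HXZ) (ent_term_ge0 XZ)).
    assert (H2 := sum_incr _ N _ (Ent_sum _ HYZ) (ent_term_ge0 YZ)).
    assert (H3 := partial_sum_ratio_le1 N). lra. }
  assert (HXYZ : finite_entropy p XYZ).
  { apply (infinite_sum_of_partial_le _ (Ent p XZ + Ent p YZ + 1)); [apply ent_term_ge0|].
    intros N. specialize (Hpartial N).
    assert (0 <= sum_f_R0 (ent_term p Z) N) by (apply cond_pos_sum, ent_term_ge0).
    assert (0 <= sum_f_R0 p N) by (apply cond_pos_sum, pmf_ge0). lra. }
  split; [exact HXYZ|].
  assert (Hlim := CV_minus _ _ _ _ (Un_cv_const (Ent p XZ + Ent p YZ + 1)) (proj2 hp)).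
  assert (H := Rle_cv_lim Hpartial
                 (CV_plus _ _ _ _ (Ent_sum _ HXYZ) (Ent_sum _ HZ)) Hlim).
  lra.
Qed.

End Submodularity.

Lemma Ent_pair_le {A B} (X : nat -> A) (Y : nat -> B) :
  finite_entropy p X -> finite_entropy p Y ->
  finite_entropy p (fun w => (X w, Y w)) /\ Ent p (fun w => (X w, Y w)) <= Ent p X + Ent p Y.
Proof.
  intros HX HY.
  assert (HXt : same_partition (fun w => (X w, tt)) X)
    by (intros w w'; rewrite pair_equal_spec; tauto).
  assert (HYt : same_partition (fun w => (Y w, tt)) Y)
    by (intros w w'; rewrite pair_equal_spec; tauto).
  assert (HXYt : same_partition (fun w => (X w, Y w, tt)) (fun w => (X w, Y w)))
    by (intros w w'; rewrite !pair_equal_spec; tauto).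
  destruct (Ent_submodular X Y (fun _ => tt)) as [Hfin Hle].
  - apply (finite_entropy_same_partition X); [intros w w'; symmetry; apply HXt | exact HX].
  - apply (finite_entropy_same_partition Y); [intros w w'; symmetry; apply HYt | exact HY].
  - rewrite (Ent_same_partition _ _ HXYt), (Ent_same_partition _ _ HXt),
      (Ent_same_partition _ _ HYt), Ent_const in Hle.
    split; [apply (finite_entropy_same_partition _ _ HXYt), Hfin | lra].
Qed.

End Probability.

Lemma rsum_le n f g : (forall k, (1 <= k <= n)%nat -> f k <= g k) -> rsum n f <= rsum n g.
Proof.
  induction n as [|n IH]; simpl; intros H; [lra|].
  assert (H1 := H (S n) ltac:(lia)).
  assert (rsum n f <= rsum n g) by (apply IH; intros; apply H; lia). lra.
Qed.

Lemma rsum_ext n f g : (forall k, (1 <= k <= n)%nat -> f k = g k) -> rsum n f = rsum n g.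
Proof. intros H; apply Rle_antisym; apply rsum_le; intros k Hk; rewrite H; auto; lra. Qed.

Lemma rsum_plus n f g : rsum n (fun k => f k + g k) = rsum n f + rsum n g.
Proof. induction n as [|n IH]; simpl; [|rewrite IH]; ring. Qed.

Lemma rsum_scal n c f : rsum n (fun k => c * f k) = c * rsum n f.
Proof. induction n as [|n IH]; simpl; [|rewrite IH]; ring. Qed.

Lemma rsum_const n c : rsum n (fun _ => c) = INR n * c.
Proof. induction n as [|n IH]; simpl rsum; [simpl; ring | rewrite IH, S_INR; ring]. Qed.

Lemma rsum_telescope n g : rsum n (fun k => g (k - 1)%nat - g k) = g 0%nat - g n.
Proof.
  induction n as [|n IH]; simpl rsum; [ring|].
  rewrite IH. replace (n - 0)%nat with n by lia. ring.
Qed.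

Lemma rsum_skip n a f : (1 <= a <= n)%nat ->
  rsum n (fun b => if Nat.eq_dec a b then 0 else f b) = rsum n f - f a.
Proof.
  induction n as [|n IH]; intros Ha; [lia|]. simpl rsum.
  destruct (Nat.eq_dec a (S n)) as [->|Hne].
  - rewrite (rsum_ext n _ f); [ring|].
    intros k Hk. destruct (Nat.eq_dec (S n) k); [lia | reflexivity].
  - rewrite IH by lia. ring.
Qed.

Lemma ln_rprod n f : (forall d, (1 <= d <= n)%nat -> 0 < f d) ->
  0 < rprod n f /\ ln (rprod n f) = rsum n (fun d => ln (f d)).
Proof.
  induction n as [|n IH]; simpl; intros H; [split; [lra | apply ln_1]|].
  destruct IH as [Hpos Hln]; [intros; apply H; lia|].
  assert (Hn := H (S n) ltac:(lia)).
  split; [apply Rmult_lt_0_compat; auto | rewrite ln_mult, Hln; auto].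
Qed.

Section PairwiseBound.
Variable D : nat.
Variables ent entS : (nat -> Prop) -> R.
Let HS := entS (fun _ => False).
Hypothesis ent_ext : forall P Q, (forall d, (1 <= d <= D)%nat -> (P d <-> Q d)) -> ent P = ent Q.
Hypothesis entS_ext : forall P Q, (forall d, (1 <= d <= D)%nat -> (P d <-> Q d)) -> entS P = entS Q.
Hypothesis ent_submodular : forall P1 P2 P3,
  ent (fun d => P1 d \/ P2 d \/ P3 d) + ent P3 <= ent (fun d => P1 d \/ P3 d) + ent (fun d => P2 d \/ P3 d).
Hypothesis entS_submodular : forall P1 P2 P3,
  entS (fun d => P1 d \/ P2 d \/ P3 d) + entS P3 <= entS (fun d => P1 d \/ P3 d) + entS (fun d => P2 d \/ P3 d).
Hypothesis ent_le_entS : forall P, ent P <= entS P.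
Hypothesis entS_le : forall P, entS P <= ent P + HS.
Hypothesis ent_full : ent (fun _ => True) = rsum D (fun d => ent (fun e => e = d)).
Hypothesis ent_empty : ent (fun _ => False) = 0.

(* Telescope along Q, Q + {1}, Q + {1,2}, ..., Q + [1:D]; submodularity bounds each step. *)
Lemma sum_entS_increments_le (Q : nat -> Prop) :
  rsum D (fun b => entS Q - entS (fun e => Q e \/ e = b)) <= entS Q - entS (fun _ => True).
Proof.
  set (upto k := entS (fun e => Q e \/ (e <= k)%nat)).
  assert (Hstep : forall b, (1 <= b <= D)%nat ->
            entS Q - entS (fun e => Q e \/ e = b) <= upto (b - 1)%nat - upto b).
  { intros b Hb. assert (H := entS_submodular (fun e => e = b) (fun e => (e <= b - 1)%nat) Q).
    cbv beta in H. unfold upto.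
    rewrite (entS_ext (fun d => d = b \/ (d <= b - 1)%nat \/ Q d) (fun e => Q e \/ (e <= b)%nat)),
      (entS_ext (fun d => d = b \/ Q d) (fun e => Q e \/ e = b)),
      (entS_ext (fun d => (d <= b - 1)%nat \/ Q d) (fun e => Q e \/ (e <= b - 1)%nat)) in H
      by (intros; intuition lia).
    lra. }
  eapply Rle_trans; [apply rsum_le, Hstep|]. rewrite rsum_telescope. unfold upto.
  rewrite (entS_ext (fun e => Q e \/ (e <= 0)%nat) Q) by (intros; intuition lia).
  rewrite (entS_ext (fun e => Q e \/ (e <= D)%nat) (fun _ => True)) by (intros; intuition lia).
  lra.
Qed.

(* [mi a] is I(W_a; S) and [cmi a b] is I(W_b; S | W_a), so that
   I(W_a, W_b; S) = mi a + cmi a b. *)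
Let mi a := ent (fun e => e = a) + HS - entS (fun e => e = a).
Let cmi a b := ent (fun e => e = a \/ e = b) + entS (fun e => e = a)
               - entS (fun e => e = a \/ e = b) - ent (fun e => e = a).

Lemma sum_mi_le : rsum D mi <= HS.
Proof.
  assert (H := sum_entS_increments_le (fun _ => False)). fold HS in H.
  rewrite (rsum_ext D _ (fun b => HS - entS (fun e => e = b))) in H
    by (intros b _; unfold HS; f_equal; apply entS_ext; intros; tauto).
  unfold mi. rewrite (rsum_ext D _ (fun a => ent (fun e => e = a) + (HS - entS (fun e => e = a))))
    by (intros; ring).
  rewrite rsum_plus, <- ent_full. generalize (ent_le_entS (fun _ => True)). lra.
Qed.

Lemma sum_cmi_le a : (1 <= a <= D)%nat ->
  rsum D (fun b => if Nat.eq_dec a b then 0 else cmi a b) <= HS.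
Proof.
  intros Ha.
  assert (Hsub : forall b, a <> b ->
            ent (fun e => e = a \/ e = b) <= ent (fun e => e = a) + ent (fun e => e = b)).
  { intros b _. assert (H := ent_submodular (fun e => e = a) (fun e => e = b) (fun _ => False)).
    cbv beta in H.
    rewrite ent_empty in H.
    rewrite (ent_ext (fun d => d = a \/ d = b \/ False) (fun e => e = a \/ e = b)),
      (ent_ext (fun d => d = a \/ False) (fun e => e = a)),
      (ent_ext (fun d => d = b \/ False) (fun e => e = b)) in H by (intros; tauto).
    lra. }
  assert (Hinc := sum_entS_increments_le (fun e => e = a)).
  eapply Rle_trans with (rsum D (fun b => (if Nat.eq_dec a b then 0 else ent (fun e => e = b))
                                        + (entS (fun e => e = a) - entS (fun e => e = a \/ e = b)))).
  - apply rsum_le. intros b Hb. unfold cmi. destruct (Nat.eq_dec a b) as [<-|Hne].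
    + rewrite (entS_ext (fun e => e = a \/ e = a) (fun e => e = a)) by (intros; tauto). lra.
    + generalize (Hsub b Hne). lra.
  - rewrite rsum_plus, rsum_skip, <- ent_full by exact Ha.
    generalize (entS_le (fun e => e = a)) (ent_le_entS (fun _ => True)). lra.
Qed.

Lemma sum_pair_mi_le : (1 <= D)%nat ->
  rsum D (fun a => rsum D (fun b => if Nat.eq_dec a b then 0 else
     ent (fun e => e = a \/ e = b) + HS - entS (fun e => e = a \/ e = b)))
  <= (2 * INR D - 1) * HS.
Proof.
  intros HD.
  rewrite (rsum_ext D _ (fun a => (INR D - 1) * mi a
                                 + rsum D (fun b => if Nat.eq_dec a b then 0 else cmi a b))).
  - rewrite rsum_plus, rsum_scal.
    assert (Hmi := sum_mi_le).
    assert (Hcmi : rsum D (fun a => rsum D (fun b => if Nat.eq_dec a b then 0 else cmi a b))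
                   <= rsum D (fun _ => HS)) by (apply rsum_le; intros; apply sum_cmi_le; auto).
    rewrite rsum_const in Hcmi.
    assert (HD' : 1 <= INR D) by (apply (le_INR 1); exact HD).
    assert ((INR D - 1) * rsum D mi <= (INR D - 1) * HS) by (apply Rmult_le_compat_l; lra).
    lra.
  - intros a Ha.
    rewrite (rsum_ext D _ (fun b => (if Nat.eq_dec a b then 0 else mi a)
                                   + (if Nat.eq_dec a b then 0 else cmi a b)))
      by (intros b _; unfold mi, cmi; destruct (Nat.eq_dec a b); ring).
    rewrite rsum_plus, rsum_skip, rsum_const by exact Ha. ring.
Qed.

End PairwiseBound.

Section Subvectors.
Variables (D : nat) (p : nat -> R) (W : nat -> nat -> nat).
Hypothesis hp : is_pmf p.
Hypothesis hind : mutually_independent p D W.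
Hypothesis hW : forall d, (1 <= d <= D)%nat -> finite_entropy p (W d).

(* W_P = (W_d)_{d in P}, coded as a function padded with 0 outside P and [1:D]. *)
Definition subvec (P : nat -> Prop) (w : nat) : nat -> nat :=
  fun d => if excluded_middle_informative (P d /\ (1 <= d <= D)%nat) then W d w else 0%nat.

Lemma subvec_eq_iff P w w' :
  subvec P w' = subvec P w <-> forall d, P d -> (1 <= d <= D)%nat -> W d w' = W d w.
Proof.
  split.
  - intros H d HP Hd. assert (Hd' := f_equal (fun f => f d) H). unfold subvec in Hd'.
    destruct excluded_middle_informative; tauto.
  - intros H. apply functional_extensionality; intros d. unfold subvec.
    destruct excluded_middle_informative as [[HP Hd]|]; auto.
Qed.

Lemma subvec_union_eq_iff P Q w w' :
  subvec (fun d => P d \/ Q d) w' = subvec (fun d => P d \/ Q d) w <->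
  subvec P w' = subvec P w /\ subvec Q w' = subvec Q w.
Proof.
  rewrite !subvec_eq_iff. split.
  - intros H. split; intros d Hd; apply H; auto.
  - intros [HP HQ] d [Hd|Hd]; [apply HP | apply HQ]; assumption.
Qed.

Lemma subvec_ext P Q : (forall d, (1 <= d <= D)%nat -> (P d <-> Q d)) -> subvec P = subvec Q.
Proof.
  intros H. apply functional_extensionality; intros w. apply functional_extensionality; intros d.
  unfold subvec.
  destruct (excluded_middle_informative (P d /\ _)) as [[HP Hd]|HnP],
    (excluded_middle_informative (Q d /\ _)) as [[HQ Hd']|HnQ]; auto;
    exfalso; [apply HnQ | apply HnP]; split; auto; apply H; auto.
Qed.

Lemma ent_term_subvec_full w :
  ent_term p (subvec (fun _ => True)) w = rsum D (fun d => ent_term p (W d) w).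
Proof.
  unfold ent_term.
  rewrite (Pr_ext p _ (fun w' => forall d, (1 <= d <= D)%nat -> W d w' = W d w))
    by (intros w'; rewrite subvec_eq_iff; firstorder).
  rewrite (hind (fun d => W d w)).
  destruct (pmf_ge0 p hp w) as [Hw|Hw].
  - destruct (ln_rprod D (fun d => Pr p (fun w' => W d w' = W d w))) as [_ ->].
    + intros d _. apply Rlt_le_trans with (p w); [exact Hw | apply pmf_le_Pr; auto].
    + rewrite Ropp_mult_distr_r_reverse, Ropp_mult_distr_l, <- rsum_scal.
      apply rsum_ext. intros; ring.
  - rewrite <- Hw, (rsum_ext D _ (fun _ => 0)), rsum_const by (intros; ring). ring.
Qed.

Lemma Ent_subvec_full :
  finite_entropy p (subvec (fun _ => True)) /\
  Ent p (subvec (fun _ => True)) = rsum D (fun d => Ent p (W d)).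
Proof.
  assert (H : infinite_sum (ent_term p (subvec (fun _ => True))) (rsum D (fun d => Ent p (W d)))).
  { eapply infinite_sum_ext; [intros k; symmetry; apply ent_term_subvec_full|].
    apply infinite_sum_rsum. intros; apply Ent_sum, hW; auto. }
  split; [exists (rsum D (fun d => Ent p (W d))); exact H | apply sum_of_eq, H].
Qed.

Section WithSideVariable.
Context {C : Type} (T : nat -> C).
Hypothesis hT : finite_entropy p T.

Definition ent_with (P : nat -> Prop) : R := Ent p (fun w => (subvec P w, T w)).

Lemma ent_with_ext P Q :
  (forall d, (1 <= d <= D)%nat -> (P d <-> Q d)) -> ent_with P = ent_with Q.
Proof. intros H. unfold ent_with. rewrite (subvec_ext P Q H). reflexivity. Qed.

Lemma finite_entropy_subvec_with P : finite_entropy p (fun w => (subvec P w, T w)).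
Proof.
  apply (Ent_le_of_determines p hp (fun w => (subvec (fun _ => True) w, T w))).
  - intros w w'. rewrite !pair_equal_spec, !subvec_eq_iff. firstorder.
  - apply (Ent_pair_le p hp); [apply Ent_subvec_full | exact hT].
Qed.

Lemma ent_with_submodular P1 P2 P3 :
  ent_with (fun d => P1 d \/ P2 d \/ P3 d) + ent_with P3
  <= ent_with (fun d => P1 d \/ P3 d) + ent_with (fun d => P2 d \/ P3 d).
Proof.
  assert (H13 : same_partition (fun w => (subvec P1 w, (subvec P3 w, T w)))
                               (fun w => (subvec (fun d => P1 d \/ P3 d) w, T w)))
    by (intros w w'; rewrite !pair_equal_spec, subvec_union_eq_iff; tauto).
  assert (H23 : same_partition (fun w => (subvec P2 w, (subvec P3 w, T w)))
                               (fun w => (subvec (fun d => P2 d \/ P3 d) w, T w)))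
    by (intros w w'; rewrite !pair_equal_spec, subvec_union_eq_iff; tauto).
  assert (H123 : same_partition (fun w => (subvec P1 w, subvec P2 w, (subvec P3 w, T w)))
                                (fun w => (subvec (fun d => P1 d \/ P2 d \/ P3 d) w, T w)))
    by (intros w w'; rewrite !pair_equal_spec, !subvec_union_eq_iff; tauto).
  destruct (Ent_submodular p hp (subvec P1) (subvec P2) (fun w => (subvec P3 w, T w)))
    as [_ Hle].
  - apply (finite_entropy_same_partition p _ _ (fun w w' => iff_sym (H13 w w'))).
    apply finite_entropy_subvec_with.
  - apply (finite_entropy_same_partition p _ _ (fun w w' => iff_sym (H23 w w'))).
    apply finite_entropy_subvec_with.
  - unfold ent_with.
    rewrite (Ent_same_partition p _ _ H13), (Ent_same_partition p _ _ H23),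
      (Ent_same_partition p _ _ H123) in Hle.
    exact Hle.
Qed.

End WithSideVariable.

(* [ent P] is H(W_P) (pairing with a constant changes no entropy); [entS P] below is H(W_P, S). *)
Local Notation ent := (ent_with (fun _ : nat => tt)).

Lemma ent_full : ent (fun _ => True) = rsum D (fun d => ent (fun e => e = d)).
Proof.
  unfold ent_with.
  rewrite (Ent_same_partition p _ (subvec (fun _ => True)))
    by (intros w w'; rewrite pair_equal_spec; tauto).
  rewrite (proj2 Ent_subvec_full). apply rsum_ext. intros d Hd. apply Ent_same_partition.
  intros w w'. rewrite pair_equal_spec, subvec_eq_iff. split.
  - intros H. split; [intros e -> _; exact H | reflexivity].
  - intros [H _]. apply H; auto.
Qed.

Lemma ent_empty : ent (fun _ => False) = 0.
Proof.
  unfold ent_with. rewrite (Ent_same_partition p _ (fun _ => tt)) by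
    (intros w w'; rewrite pair_equal_spec, subvec_eq_iff; firstorder).
  apply (Ent_const p hp).
Qed.

Variable S : nat -> nat.

Local Notation entS := (ent_with S).

Lemma Ent_eq_ent_with_empty : Ent p S = entS (fun _ => False).
Proof.
  apply Ent_same_partition. intros w w'. rewrite pair_equal_spec, subvec_eq_iff.
  split; [intros H; split; [intros d [] | exact H] | intros [_ H]; exact H].
Qed.

Lemma MI_pair_eq a b : (1 <= a <= D)%nat -> (1 <= b <= D)%nat ->
  MI p (fun w => (W a w, W b w)) S =
  ent (fun e => e = a \/ e = b) + entS (fun _ => False) - entS (fun e => e = a \/ e = b).
Proof.
  intros Ha Hb. unfold MI. rewrite Ent_eq_ent_with_empty. unfold ent_with.
  assert (Hab : forall w w', (W a w', W b w') = (W a w, W b w) <->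
                subvec (fun e => e = a \/ e = b) w' = subvec (fun e => e = a \/ e = b) w)
    by (intros w w'; rewrite pair_equal_spec, subvec_eq_iff;
        split; [intros [Ha' Hb'] d [->| ->] _; assumption | intros H; split; apply H; auto]).
  rewrite (Ent_same_partition p (fun w => (W a w, W b w))
             (fun w => (subvec (fun e => e = a \/ e = b) w, tt)))
    by (intros w w'; rewrite Hab, pair_equal_spec; tauto).
  rewrite (Ent_same_partition p (fun w => (W a w, W b w, S w))
             (fun w => (subvec (fun e => e = a \/ e = b) w, S w)))
    by (intros w w'; rewrite pair_equal_spec, Hab, pair_equal_spec; tauto).
  ring.
Qed.

Hypothesis hS : finite_entropy p S.

Lemma ent_le_entS P : ent P <= entS P.
Proof.
  apply (Ent_le_of_determines p hp (fun w => (subvec P w, S w))).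
  - intros w w'. rewrite !pair_equal_spec. tauto.
  - apply finite_entropy_subvec_with, hS.
Qed.

Lemma entS_le P : entS P <= ent P + entS (fun _ => False).
Proof.
  rewrite <- Ent_eq_ent_with_empty. unfold ent_with.
  rewrite (Ent_same_partition p _ (fun w => ((subvec P w, tt), S w)))
    by (intros w w'; rewrite !pair_equal_spec; tauto).
  apply (Ent_pair_le p hp); [apply finite_entropy_subvec_with, (finite_entropy_const p hp) | exact hS].
Qed.

End Subvectors.

Theorem mainTheorem5 (D : nat) (p : nat -> R) (W : nat -> nat -> nat) (S : nat -> nat)
  (hD : (2 <= D)%nat) (hp : is_pmf p)
  (hind : mutually_independent p D W)
  (hW : forall d, (1 <= d <= D)%nat -> finite_entropy p (W d))
  (hS : finite_entropy p S) :
  rsum D (fun d1 => rsum D (fun d2 =>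
      if Nat.eq_dec d1 d2 then 0
      else MI p (fun w => (W d1 w, W d2 w)) S))
  <= (2 * INR D - 1) * Ent p S.
Proof.
  set (ent := ent_with D p W (fun _ : nat => tt)).
  set (entS := ent_with D p W S).
  rewrite (Ent_eq_ent_with_empty D p W S).
  eapply Rle_trans; [|apply (sum_pair_mi_le D ent entS); try lia].
  - right. apply rsum_ext; intros a Ha. apply rsum_ext; intros b Hb.
    destruct Nat.eq_dec; [reflexivity | apply (MI_pair_eq D p W S); auto].
  - apply ent_with_ext.
  - apply ent_with_ext.
  - apply (ent_with_submodular D p W hp hind hW), (finite_entropy_const p hp).
  - apply (ent_with_submodular D p W hp hind hW), hS.
  - apply (ent_le_entS D p W hp hind hW S hS).
  - apply (entS_le D p W hp hind hW S hS).
  - exact (ent_full D p W hp hind hW).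
  - exact (ent_empty D p W hp).
Qed.
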